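(* Let $\mathcal X=\{1,\dots,N\}$ with $N\ge 2$, let $T\ge1$, let $\mathrm{PWS}$ be a piecewise stationary source for sequences of length $T$ with complexity $C_{\mathrm{PWS}}$, and let $u$ be the uniform distribution on $\mathcal X$. Let $\mathrm{PS}$ be the Probability Smoothing model with fixed parameters $(\alpha,\varepsilon,p)$, where $0<\alpha<1$, $0\le\varepsilon\le1-\frac1N$ and $p$ is a distribution on $\mathcal X$ with $p(x)\ge\frac{\varepsilon}{N-1}$ for all $x$. Then for every sequence $x_{1:T}\in\mathcal X^T$, \[ \ell_{\mathrm{PS}}(x_{1:T})\le \ell_{\mathrm{PWS}}(x_{1:T})+\Big[\frac{\log\frac1{1-\varepsilon}}{\log\frac1\alpha}+N\log\frac1\alpha+(N+1)\log\frac1{1-\varepsilon}\Big]\cdot T+\frac{\log\frac N\varepsilon}{\log\frac1\alpha}\cdot C_{\mathrm{PWS}}+N\cdot D(u\parallel p). \]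
   Context: All logarithms are natural, with $\log\frac10=+\infty$ (so e.g. $\log\frac N\varepsilon=+\infty$ if $\varepsilon=0$). A model maps each finite sequence $x_{1:t}$ over $\mathcal X$ (including the empty sequence) to a distribution on $\mathcal X$; write $M(x;x_{1:t})$ for the probability it gives to $x$. The code length a model $M$ assigns is $\ell_M(x_{1:T})=\sum_{t=1}^T\log\frac1{M(x_t;x_{<t})}$, where $x_{<t}=x_{1:t-1}$. Probability Smoothing with fixed parameters $(\alpha,\varepsilon,p)$: $\mathrm{PS}(\cdot;\text{empty})=p$, and for $t\ge1$, $\mathrm{PS}(x;x_{1:t})=\alpha\,\mathrm{PS}(x;x_{<t})+(1-\alpha)(1-\varepsilon)$ if $x=x_t$, and $=\alpha\,\mathrm{PS}(x;x_{<t})+(1-\alpha)\frac{\varepsilon}{N-1}$ if $x\ne x_t$. A piecewise stationary source (PWS) for length $T$ is given by a partition $\mathcal P=\{[t_1,t_2),[t_2,t_3),\dots,[t_n,t_{n+1})\}$ of $\{1,\dots,T\}$ into integer intervals ($[i,j)=\{i,\dots,j-1\}$, $1=t_1<\dots<t_{n+1}=T+1$) and distributions $\{p_S\}_{S\in\mathcal P}$ on $\mathcal X$; it predicts $p_S$ at time $t$ where $S$ is the segment containing $t$, so $\ell_{\mathrm{PWS}}(x_{1:T})=\sum_{S\in\mathcal P}\sum_{t\in S}\log\frac1{p_S(x_t)}$. The transition set $\mathcal T$ of $\mathcal P$ consists of the triples $(t,A,B)$ with $A=[i,t)\in\mathcal P$ and $B=[t,j)\in\mathcal P$ consecutive segments.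 The complexity is $C_{\mathrm{PWS}}=1+\sum_{(t,A,B)\in\mathcal T}\lVert p_B-p_A\rVert$, where $\lVert p-q\rVert=\sum_x|p(x)-q(x)|$. For distributions $q,r$ with $r$ fully supported, $D(q\parallel r)=\sum_{x:\,q(x)>0}q(x)\log\frac{q(x)}{r(x)}$. *)

From mathcomp Require Import all_boot all_order all_algebra.
From mathcomp Require Import all_classical all_reals.
From mathcomp Require Import ereal sequences exp.
Set Implicit Arguments. Unset Strict Implicit. Unset Printing Implicit Defensive.
Import Order.TTheory GRing.Theory Num.Theory.
Local Open Scope ring_scope.

(* The alphabet {1,...,N} is represented by 'I_N = {0,...,N-1}. *)

Definition elogdiv {R : realType} (a b : R) : \bar R :=
  if b == 0 then +oo%E else (ln (a / b))%:E.

Definition loginv {R : realType} (q : R) : \bar R := elogdiv 1 q.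

Definition is_dist {R : realType} {N : nat} (q : 'I_N -> R) : Prop :=
  (forall x, 0 <= q x) /\ \sum_(x < N) q x = 1.

Definition model (R : realType) (N : nat) := seq 'I_N -> 'I_N -> R.

Definition codelen {R : realType} {N T : nat} (M : model R N)
  (xs : T.-tuple 'I_N) : \bar R :=
  (\sum_(t < T) loginv (M (take t xs) (tnth xs t)))%E.

Definition ps_step {R : realType} {N : nat} (alpha eps : R)
  (q : 'I_N -> R) (y : 'I_N) : 'I_N -> R :=
  fun x => if x == y then alpha * q x + (1 - alpha) * (1 - eps)
           else alpha * q x + (1 - alpha) * (eps / (N%:R - 1)).

Definition PS {R : realType} {N : nat} (alpha eps : R) (p : 'I_N -> R)
  : model R N :=
  fun h => foldl (ps_step alpha eps) p h.

(** Piecewise stationary source for length T (0-indexed times 0..T-1):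
    n segments [tb k, tb (k+1)) for k < n, with tb 0 = 0, tb n = T,
    tb strictly increasing; segment k uses distribution q k. *)
Definition is_PWS {R : realType} {N : nat} (T n : nat) (tb : nat -> nat)
  (q : nat -> 'I_N -> R) : Prop :=
  [/\ tb 0 = 0%N, tb n = T,
      (forall k, (k < n)%N -> (tb k < tb k.+1)%N) &
      (forall k, (k < n)%N -> is_dist (q k))].

Definition PWS_codelen {R : realType} {N T : nat} (n : nat) (tb : nat -> nat)
  (q : nat -> 'I_N -> R) (xs : T.-tuple 'I_N) : \bar R :=
  (\sum_(k < n) \sum_(t < T | (tb k <= t < tb k.+1)%N)
      loginv (q k (tnth xs t)))%E.

Definition PWS_complexity {R : realType} {N : nat} (n : nat)
  (q : nat -> 'I_N -> R) : R :=
  1 + \sum_(1 <= k < n) \sum_(x < N) `|q k x - q k.-1 x|.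

Definition uniform_dist {R : realType} (N : nat) : 'I_N -> R := fun _ => N%:R^-1.

Definition KL {R : realType} {N : nat} (q r : 'I_N -> R) : \bar R :=
  (\sum_(x < N | (0 < q x)%R) (q x)%:E * elogdiv (q x) (r x))%E.

From mathcomp Require Import all_boot all_order all_algebra.
From mathcomp Require Import all_classical all_reals.
From mathcomp Require Import ereal sequences exp.
From mathcomp Require Import ring lra zify.
Import Order.TTheory GRing.Theory Num.Theory.
Local Open Scope ring_scope.

(* For a state P of the smoother consider the potentials Phi(P) = sum_x -ln P(x)
   and Psi_w(P) = sum_x w(x) (-ln P(x)).  One smoothing step on the symbol z gives,
   for every distribution w with w(z) > 0,
     -ln P(z) <= -ln w(z) + rate + (Phi P - Phi P') + (Psi_w P - Psi_w P') / ln(1/alpha),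
   an inequality that comes from the concavity of ln.  Summed over time with w the
   distribution of the current segment, Phi telescopes over the whole sequence and
   Gibbs' inequality bounds it by N D(u || p); Psi telescopes inside each segment.
   Every state stays above eps/N, so Psi takes values in [0, ln(N/eps)] and jumps by
   at most ln(N/eps) ||p_B - p_A|| at a transition.  When eps = 0, or a segment gives
   probability 0 to an observed symbol, the right-hand side is +oo. *)

Section Logarithm.
Context {R : realType}.
Implicit Types a b c q s x y : R.

Lemma ln_le_subr1 {x} : 0 < x -> ln x <= x - 1.
Proof. by move=> x0; have := @le_ln1Dx R (x - 1); rewrite subrKC; apply; lra. Qed.

Lemma ln_wmean_ge {s b c} : 0 < s -> 0 < b -> 0 < c ->
  s * ln b + ln c <= (1 + s) * ln ((s * b + c) / (1 + s)).
Proof.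
move=> s0 b0 c0; set Z := (s * b + c) / (1 + s).
have sb0 : 0 < s * b by rewrite mulr_gt0.
have Z0 : 0 < Z by apply: divr_gt0; lra.
have hb := ln_le_subr1 (divr_gt0 b0 Z0); have hc := ln_le_subr1 (divr_gt0 c0 Z0).
rewrite ln_div ?posrE // in hb; rewrite ln_div ?posrE // in hc.
have ec : c / Z - 1 = - s * (b / Z - 1).
  by rewrite /Z; field; rewrite !gt_eqF //; lra.
have : s * (ln b - ln Z) <= s * (b / Z - 1) by rewrite ler_pM2l.
lra.
Qed.

Lemma ln_lnV_le {a} : 0 < a < 1 -> ln (ln a^-1) <= ln (1 - a) + ln a^-1.
Proof.
case/andP=> a0 a1; have l0 : 0 < ln a^-1 by rewrite ln_gt0 // invf_gt1.
rewrite -lnM ?posrE ?subr_gt0 ?invr_gt0 // ler_ln ?posrE ?mulr_gt0 ?subr_gt0 ?invr_gt0 //.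
by rewrite mulrBl mul1r divff ?gt_eqF // ln_le_subr1 ?invr_gt0.
Qed.

Lemma ln_ratio_ge {s} : 0 < s -> 1 <= (1 + s) * (ln (1 + s) - ln s).
Proof.
move=> s0; have s1 : 0 < 1 + s by lra.
have := ln_le_subr1 (divr_gt0 s0 s1); rewrite ln_div ?posrE //.
have -> : s / (1 + s) - 1 = - (1 + s)^-1 by field; rewrite gt_eqF.
move=> h; have h' : (1 + s)^-1 <= ln (1 + s) - ln s by lra.
by rewrite -(ler_pM2l s1) mulfV ?gt_eqF in h'.
Qed.

Lemma ln_smoothing_ge {a y q} : 0 < a < 1 -> 0 < y -> 0 < q ->
  ln q + 1 - q <= ln a^-1 + (1 + q / ln a^-1) * ln (a * y + 1 - a)
                  - q / ln a^-1 * ln y.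
Proof.
move=> a01 y0 q0; have /andP[a0 a1] := a01.
have lnlnV := ln_lnV_le a01; have lnV_gt0 : 0 < ln a^-1 by rewrite ln_gt0 ?invf_gt1.
have lna : ln a = - ln a^-1 by rewrite lnV ?posrE ?opprK.
set l := ln a^-1 in lnlnV lnV_gt0 lna *; set s := q / l.
have s0 : 0 < s by rewrite divr_gt0.
have sl : s * l = q by rewrite mulfVK ?gt_eqF.
clearbody s l; subst q.
have s1 : 0 < 1 + s by lra.
have ay0 : 0 < a * y by rewrite mulr_gt0.
have b_gt0 : 0 < a * y * (1 + s) / s by rewrite divr_gt0 // mulr_gt0.
have c_gt0 : 0 < (1 - a) * (1 + s) by rewrite mulr_gt0 ?subr_gt0.
(* a y + 1 - a is the (s/(1+s), 1/(1+s))-weighted mean of these two points. *)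
have := ln_wmean_ge s0 b_gt0 c_gt0.
have -> : (s * (a * y * (1 + s) / s) + (1 - a) * (1 + s)) / (1 + s) = a * y + 1 - a.
  by field; rewrite !gt_eqF.
rewrite ln_div ?posrE ?mulr_gt0 // !lnM ?posrE ?subr_gt0 ?mulr_gt0 // lna.
have := ln_ratio_ge s0.
nra.
Qed.

End Logarithm.

Definition cross_entropy {R : realType} {N : nat} (w P : 'I_N -> R) : R :=
  \sum_x w x * - ln (P x).

Definition ps_rate {R : realType} (N : nat) (a e : R) : R :=
  ln (1 - e)^-1 / ln a^-1 + N%:R * ln a^-1 + (N%:R + 1) * ln (1 - e)^-1.

Lemma dist_le1 {R : realType} {N : nat} {q : 'I_N -> R} x : is_dist q -> q x <= 1.
Proof. by case=> q_ge0 <-; rewrite (bigD1 x) //= lerDl sumr_ge0. Qed.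

Section ProbabilitySmoothing.
Context {R : realType} {N : nat} (a e : R).
Hypothesis N_ge2 : (2 <= N)%N.
Implicit Types (p P w : 'I_N -> R) (z : 'I_N) (h : seq 'I_N).

Let N1_gt0 : (0 : R) < N%:R - 1.
Proof. by rewrite subr_gt0 ltr1n. Qed.

Let sum_neq_const z (c : R) : \sum_(x < N | x != z) c = c * (N%:R - 1).
Proof. by rewrite sumr_const cardC1 card_ord -[c *+ _]mulr_natr -subn1 natrB // ltnW. Qed.

Lemma ps_step_sum1 P z : \sum_x P x = 1 -> \sum_x ps_step a e P z x = 1.
Proof.
move=> P1; rewrite (bigD1 z) //= in P1; rewrite (bigD1 z) //= /ps_step eqxx.
rewrite (eq_bigr (fun x => a * P x + (1 - a) * (e / (N%:R - 1)))); last first.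
  by move=> x /negbTE ->.
rewrite big_split /= -mulr_sumr sum_neq_const.
have -> : \sum_(x < N | x != z) P x = 1 - P z by rewrite -P1 addrAC subrr add0r.
by field; rewrite lt0r_neq0.
Qed.

Lemma ps_step_ge P z : 0 <= a <= 1 -> e / (N%:R - 1) <= 1 - e ->
  (forall x, e / (N%:R - 1) <= P x) -> forall x, e / (N%:R - 1) <= ps_step a e P z x.
Proof.
set m := e / _ => /andP[a_ge0 a_le1] m_le P_ge x; have Px := P_ge x; rewrite /ps_step.
have h1 : 0 <= a * (P x - m) by rewrite mulr_ge0 ?subr_ge0.
have h2 : 0 <= (1 - a) * (1 - e - m) by rewrite mulr_ge0 ?subr_ge0 // lerBrDr addrC -lerBrDr.
rewrite -/m; clearbody m; case: (x == z); nra.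
Qed.

Lemma PS_sum1 p h : \sum_x p x = 1 -> \sum_x PS a e p h x = 1.
Proof. by rewrite /PS; elim: h p => //= z h IH p p1; apply/IH/ps_step_sum1. Qed.

Lemma PS_ge p h : 0 <= a <= 1 -> e / (N%:R - 1) <= 1 - e ->
  (forall x, e / (N%:R - 1) <= p x) -> forall x, e / (N%:R - 1) <= PS a e p h x.
Proof. by rewrite /PS => a01 m_le; elim: h p => //= z h IH p p_ge; apply/IH/ps_step_ge. Qed.

Hypotheses (a_gt0 : 0 < a) (a_lt1 : a < 1) (e_ge0 : 0 <= e) (e_lt1 : e < 1).

Lemma ln_ps_step_neq {P z x} : x != z -> 0 < P x ->
  - ln (ps_step a e P z x) <= ln a^-1 - ln (P x).
Proof.
move=> /negbTE xz Px; rewrite /ps_step xz lnV ?posrE //.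
have aPx : 0 < a * P x by rewrite mulr_gt0.
have le_step : a * P x <= a * P x + (1 - a) * (e / (N%:R - 1)).
  by rewrite lerDl mulr_ge0 ?subr_ge0 ?divr_ge0 // ltW.
have := le_step; rewrite -ler_ln ?posrE ?(lt_le_trans aPx le_step) //.
rewrite lnM ?posrE //; lra.
Qed.

Lemma ln_ps_step_eq P z : 0 < P z ->
  ln (1 - e) + ln (a * P z + 1 - a) <= ln (ps_step a e P z z).
Proof.
move=> Pz; rewrite /ps_step eqxx.
have aPz : 0 < a * P z by rewrite mulr_gt0.
have eaPz : 0 <= e * (a * P z) by rewrite mulr_ge0 // ltW.
have Z_gt0 : 0 < a * P z + 1 - a by rewrite -addrA addr_gt0 ?subr_gt0.
have e1_gt0 : 0 < 1 - e by rewrite subr_gt0.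
rewrite -lnM ?posrE // ler_ln ?posrE ?mulr_gt0 //; first by lra.
by rewrite addr_gt0 // mulr_gt0 ?subr_gt0.
Qed.

Lemma cross_entropy_ps_step_le w P z :
  (forall x, 0 <= w x) -> (forall x, 0 < P x) ->
  cross_entropy w (ps_step a e P z) <= cross_entropy w P
    + w z * (ln (P z) - ln (ps_step a e P z z)) + (\sum_x w x - w z) * ln a^-1.
Proof.
move=> w_ge0 P_gt0; rewrite /cross_entropy (bigD1 z) //= [X in _ <= X + _ + _](bigD1 z) //=.
rewrite [\sum_x w x](bigD1 z) //=.
have : \sum_(x | x != z) w x * - ln (ps_step a e P z x)
       <= \sum_(x | x != z) (w x * - ln (P x) + w x * ln a^-1).
  apply: ler_sum => x xz; rewrite -mulrDr ler_wpM2l //.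
  by have := ln_ps_step_neq xz (P_gt0 x); lra.
rewrite big_split /= -mulr_suml; lra.
Qed.

Lemma neglog_ps_step_le P q z : (forall x, 0 < P x) -> is_dist q -> 0 < q z ->
  - ln (P z) <= - ln (q z) + ps_rate N a e
    + (cross_entropy (fun=> 1) P - cross_entropy (fun=> 1) (ps_step a e P z))
    + (ln a^-1)^-1 * (cross_entropy q P - cross_entropy q (ps_step a e P z)).
Proof.
move=> P_gt0 q_dist qz_gt0; have [q_ge0 q1] := q_dist.
have qz_le1 := dist_le1 z q_dist.
have Phi_step := cross_entropy_ps_step_le (fun=> 1) P z (fun=> ler01) P_gt0.
have Psi_step := cross_entropy_ps_step_le q P z q_ge0 P_gt0.
have a01 : 0 < a < 1 by rewrite a_gt0 a_lt1.
have smooth := ln_smoothing_ge a01 (P_gt0 z) qz_gt0.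
have obs := ln_ps_step_eq P z (P_gt0 z).
rewrite sumr_const card_ord in Phi_step; rewrite q1 in Psi_step.
rewrite /ps_rate; set P' := ps_step a e P z in Phi_step Psi_step obs *.
have lnV_gt0 : 0 < ln a^-1 by rewrite ln_gt0 // invf_gt1.
have le_ge0 : 0 <= ln (1 - e)^-1 by rewrite ln_ge0 // invf_ge1 ?subr_gt0 // lerBlDr lerDl.
rewrite -[ln (1 - e)]opprK -lnV ?posrE ?subr_gt0 // in obs.
set l := ln a^-1 in lnV_gt0 Phi_step Psi_step smooth *; set le := ln (1 - e)^-1 in le_ge0 obs *.
set s := q z / l in smooth.
have s_ge0 : 0 <= s by rewrite divr_ge0 // ltW.
have s_le : s <= l^-1 by rewrite ler_piMl // invr_ge0 ltW.
have obs_scaled := ler_wpM2l (addr_ge0 ler01 s_ge0) obs.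
have s_rate_le : s * le <= l^-1 * le by rewrite ler_wpM2r.
have Psi_gain : s * (ln (P' z) - ln (P z)) - (1 - q z)
          <= l^-1 * (cross_entropy q P - cross_entropy q P').
  have -> : s * (ln (P' z) - ln (P z)) - (1 - q z)
            = l^-1 * (q z * (ln (P' z) - ln (P z)) - (1 - q z) * l).
    by rewrite /s; field; rewrite gt_eqF.
  by apply: ler_wpM2l; [rewrite invr_ge0 ltW | lra].
have rate_leN : le <= N%:R * le by rewrite ler_peMl // ler1n ltnW.
rewrite [le / l]mulrC; lra.
Qed.

End ProbabilitySmoothing.

Lemma PS_take_succ (R : realType) (N T : nat) (a e : R) (p : 'I_N -> R)
    (xs : T.-tuple 'I_N) (t : 'I_T) :
  PS a e p (take t.+1 xs) = ps_step a e (PS a e p (take t xs)) (tnth xs t).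
Proof.
by rewrite (take_nth (tnth xs t)) ?size_tuple // /PS foldl_rcons -tnth_nth.
Qed.

Lemma smoothing_floor_bounds {R : realType} {N : nat} {e : R} :
  (2 <= N)%N -> 0 <= e <= 1 - N%:R^-1 -> e / N%:R <= e / (N%:R - 1) <= 1 - e.
Proof.
move=> N_ge2 /andP[e_ge0 e_le]; have N_gt1 : (1 : R) < N%:R by rewrite ltr1n.
have N_gt0 : (0 : R) < N%:R by lra.
have N1_gt0 : (0 : R) < N%:R - 1 by rewrite subr_gt0.
apply/andP; split; rewrite ler_pdivrMr //.
  by rewrite mulrAC ler_pdivlMr // mulrBr mulr1 gerBl.
rewrite -subr_ge0; have -> : (1 - e) * (N%:R - 1) - e = N%:R * (1 - N%:R^-1 - e).
  by field; rewrite gt_eqF.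
by rewrite mulr_ge0 ?subr_ge0 // ltW.
Qed.

Section SmoothingFloor.
Context {R : realType} {N : nat} {a e : R} {p : 'I_N -> R}.
Hypotheses (N_ge2 : (2 <= N)%N) (a_bnd : 0 <= a <= 1) (e_bnd : 0 <= e <= 1 - N%:R^-1).
Hypothesis p_ge : forall x, e / (N%:R - 1) <= p x.
Implicit Type h : seq 'I_N.

Lemma PS_floor_ge h x : e / N%:R <= PS a e p h x.
Proof.
have /andP[floor_ge floor_le] := smoothing_floor_bounds N_ge2 e_bnd.
exact: le_trans floor_ge (PS_ge a e p h a_bnd floor_le p_ge x).
Qed.

Lemma PS_dist h : \sum_x p x = 1 -> is_dist (PS a e p h).
Proof.
move=> p1; split; last exact: PS_sum1.
move=> x; apply: le_trans (PS_floor_ge h x); case/andP: e_bnd => e_ge0 _.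
by rewrite divr_ge0.
Qed.

Hypothesis e_gt0 : 0 < e.

Let floor_gt0 : 0 < e / N%:R.
Proof. by rewrite divr_gt0 // ltr0n ltnW. Qed.

Lemma PS_gt0 h x : 0 < PS a e p h x.
Proof. exact: lt_le_trans floor_gt0 (PS_floor_ge h x). Qed.

Lemma neglog_PS_bounds h x : \sum_x p x = 1 ->
  0 <= - ln (PS a e p h x) <= ln (N%:R / e).
Proof.
move=> p1; have PS_gt0_hx := PS_gt0 h x.
rewrite oppr_ge0 ln_le0 ?(dist_le1 x (PS_dist h p1)) //= -invf_div lnV ?posrE //.
by rewrite lerN2 ler_ln ?posrE // PS_floor_ge.
Qed.

End SmoothingFloor.

Lemma telescope_segment (V : zmodType) (T : nat) (u : nat -> V) a b :
  (a <= b <= T)%N -> \sum_(t < T | (a <= t < b)%N) (u t - u t.+1) = u a - u b.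
Proof.
case/andP=> ab bT.
have -> : u a - u b = \sum_(a <= t < b) (u t - u t.+1).
  by rewrite -opprB -telescope_sumr // -sumrN; apply: eq_bigr => t _; rewrite opprB.
by rewrite (big_nat_widen _ _ T xpredT) // big_geq_mkord; apply: eq_bigl => t /=; rewrite andbC.
Qed.

Section Segments.
Context {T n : nat} {tb : nat -> nat}.
Hypotheses (tb0 : tb 0 = 0%N) (tbn : tb n = T).
Hypothesis tb_mono : forall k, (k < n)%N -> (tb k <= tb k.+1)%N.

Lemma segment_end_le k : (k <= n)%N -> (tb k <= T)%N.
Proof.
suff tb_le d j : (j + d)%N = n -> (tb j <= tb n)%N.
  by move=> kn; rewrite -tbn (tb_le (n - k)%N) ?subnKC.
elim: d j => [|d IH] j jd; first by rewrite -jd addn0.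
have jn : (j < n)%N by rewrite -jd addnS ltnS leq_addr.
by apply: leq_trans (tb_mono _ jn) _; apply: IH; rewrite addSnnS.
Qed.

Lemma sum_segments (V : nmodType) (f : 'I_T -> V) :
  \sum_(k < n) \sum_(t < T | (tb k <= t < tb k.+1)%N) f t = \sum_t f t.
Proof.
suff prefix m : (m <= n)%N ->
    \sum_(k < m) \sum_(t < T | (tb k <= t < tb k.+1)%N) f t
    = \sum_(t < T | (t < tb m)%N) f t.
  by rewrite prefix // tbn; apply: eq_bigl => t; rewrite ltn_ord.
elim: m => [|m IH] mn; first by rewrite big_ord0 tb0 big_pred0.
rewrite big_ord_recr /= IH ?(ltnW mn) // [RHS](bigID (fun t : 'I_T => (t < tb m)%N)) /=.
have := tb_mono _ mn => tb_m; congr (_ + _); apply: eq_bigl => t; apply/idP/idP; lia.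
Qed.

Lemma sum_segments_telescope (R : pzRingType) (g : nat -> 'I_T -> R) (A c : R)
    (u : nat -> R) (v : nat -> nat -> R) :
  \sum_(k < n) \sum_(t < T | (tb k <= t < tb k.+1)%N)
      (g k t + A + (u t - u t.+1) + c * (v k t - v k t.+1))
  = \sum_(k < n) \sum_(t < T | (tb k <= t < tb k.+1)%N) g k t + A * T%:R
    + (u 0%N - u T) + c * \sum_(k < n) (v k (tb k) - v k (tb k.+1)).
Proof.
rewrite (eq_bigr (fun k : 'I_n => \sum_(t < T | (tb k <= t < tb k.+1)%N) g k t
    + \sum_(t < T | (tb k <= t < tb k.+1)%N) A
    + \sum_(t < T | (tb k <= t < tb k.+1)%N) (u t - u t.+1)
    + c * (v k (tb k) - v k (tb k.+1)))) => [|k _]; last first.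
  rewrite !big_split /= -mulr_sumr telescope_segment // tb_mono //=.
  exact: segment_end_le.
have tele : \sum_(t < T) (u t - u t.+1) = u 0%N - u T.
  rewrite -(big_mkord xpredT (fun t => u t - u t.+1)) -opprB -telescope_sumr // -sumrN.
  by apply: eq_bigr => t _; rewrite opprB.
rewrite !big_split /= -mulr_sumr !sum_segments tele sumr_const card_ord mulr_natr.
by rewrite big_split.
Qed.

End Segments.

Lemma telescope_segments_le (R : realDomainType) (n : nat) (b : nat -> nat)
    (v : nat -> nat -> R) (M : R) (d : nat -> R) :
  0 <= M -> (forall k j, (k < n)%N -> 0 <= v k j <= M) ->
  (forall k j, (k.+1 < n)%N -> v k.+1 j - v k j <= d k.+1) ->
  \sum_(k < n) (v k (b k) - v k (b k.+1)) <= M + \sum_(1 <= k < n) d k.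
Proof.
move=> M_ge0 v_bnd v_lip.
have prefix i : (i < n)%N ->
    \sum_(k < i.+1) (v k (b k) - v k (b k.+1)) + v i (b i.+1)
    <= M + \sum_(1 <= k < i.+1) d k.
  elim: i => [|i IH] i_lt.
    rewrite big_ord_recr big_ord0 big_geq //= add0r subrK addr0.
    by have /andP[] := v_bnd 0%N (b 0%N) i_lt.
  rewrite big_ord_recr big_nat_recr //=.
  by have := IH (ltnW i_lt); have := v_lip i (b i.+1) i_lt; lra.
case: n v_bnd v_lip prefix => [|n] v_bnd _ prefix; first by rewrite big_ord0 big_geq ?addr0.
by have := prefix n (ltnSn n); have /andP[] := v_bnd n (b n.+1) (ltnSn n); lra.
Qed.

Section CrossEntropy.
Context {R : realType} {N : nat}.
Implicit Types (w P : 'I_N -> R) (M : R).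

Lemma cross_entropy_bounds w P M : is_dist w ->
  (forall x, 0 <= - ln (P x) <= M) -> 0 <= cross_entropy w P <= M.
Proof.
case=> w_ge0 w1 P_bnd; rewrite /cross_entropy; apply/andP; split.
  by apply: sumr_ge0 => x _; rewrite mulr_ge0 //; case/andP: (P_bnd x).
rewrite -[M]mul1r -w1 mulr_suml; apply: ler_sum => x _.
by rewrite ler_wpM2l //; case/andP: (P_bnd x).
Qed.

Lemma cross_entropyBl_le w w' P M : (forall x, 0 <= - ln (P x) <= M) ->
  cross_entropy w' P - cross_entropy w P <= M * \sum_x `|w' x - w x|.
Proof.
move=> P_bnd; rewrite /cross_entropy -sumrB mulr_sumr; apply: ler_sum => x _.
have /andP[P_ge0 P_le] := P_bnd x.
rewrite -mulrBl mulrC (le_trans (ler_wpM2l P_ge0 (ler_norm _))) //.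
by rewrite ler_wpM2r.
Qed.

Lemma cross_entropy1_ge {P} : (0 < N)%N -> (forall x, 0 < P x) -> \sum_x P x = 1 ->
  N%:R * ln N%:R <= cross_entropy (fun=> 1) P.
Proof.
move=> N_gt0 P_gt0 P1.
have : \sum_x (ln N%:R + ln (P x)) <= \sum_x (N%:R * P x - 1).
  apply: ler_sum => x _; rewrite -lnM ?posrE ?ltr0n //.
  by apply: ln_le_subr1; rewrite mulr_gt0 ?ltr0n.
rewrite big_split /= sumrB -mulr_sumr P1 !sumr_const card_ord => sum_ln_le.
rewrite /cross_entropy (eq_bigr (fun x => - ln (P x))) => [|x _]; last exact: mul1r.
by rewrite sumrN mulr_natl; lra.
Qed.

End CrossEntropy.

Lemma PS_neglog_sum_le (R : realType) (N T n : nat) (tb : nat -> nat)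
    (q : nat -> 'I_N -> R) (a e : R) (p : 'I_N -> R) (xs : T.-tuple 'I_N) :
  (2 <= N)%N -> is_PWS T n tb q -> 0 < a < 1 -> 0 < e <= 1 - N%:R^-1 ->
  is_dist p -> (forall x, e / (N%:R - 1) <= p x) ->
  (forall (k : 'I_n) (t : 'I_T), (tb k <= t < tb k.+1)%N -> 0 < q k (tnth xs t)) ->
  \sum_(t < T) - ln (PS a e p (take t xs) (tnth xs t)) <=
  \sum_(k < n) \sum_(t < T | (tb k <= t < tb k.+1)%N) - ln (q k (tnth xs t))
  + ps_rate N a e * T%:R + ln (N%:R / e) / ln a^-1 * PWS_complexity n q
  + (cross_entropy (fun=> 1) p - N%:R * ln N%:R).
Proof.
move=> N_ge2 [tb0 tbn tb_lt q_dist] a01 /andP[e_gt0 e_le] [p_ge0 p1] p_ge q_pos.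
have /andP[a_gt0 a_lt1] := a01.
have N_gt1 : (1 : R) < N%:R by rewrite ltr1n.
have N_gt0 : (0 : R) < N%:R by lra.
have e_lt1 : e < 1 by have := invr_gt0 (N%:R : R); rewrite N_gt0; lra.
have a_bnd : 0 <= a <= 1 by rewrite !ltW.
have e_bnd : 0 <= e <= 1 - N%:R^-1 by rewrite ltW.
set S := fun j => PS a e p (take j xs).
have S_gt0 j := PS_gt0 N_ge2 a_bnd e_bnd p_ge e_gt0 (take j xs).
have S_dist j := PS_dist N_ge2 a_bnd e_bnd p_ge (take j xs) p1.
have S_bnd j x := neglog_PS_bounds N_ge2 a_bnd e_bnd p_ge e_gt0 (take j xs) x p1.
set Phi := fun j => cross_entropy (fun=> 1) (S j).
set Psi := fun (k : nat) j => cross_entropy (q k) (S j).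
have step (k : 'I_n) (t : 'I_T) : (tb k <= t < tb k.+1)%N ->
    - ln (S t (tnth xs t)) <= - ln (q k (tnth xs t)) + ps_rate N a e
      + (Phi t - Phi t.+1) + (ln a^-1)^-1 * (Psi k t - Psi k t.+1).
  move=> t_in; rewrite /Phi /Psi /S PS_take_succ.
  apply: neglog_ps_step_le => //; [exact: ltW | | exact: q_pos].
  exact/q_dist/ltn_ord.
have tb_mono k : (k < n)%N -> (tb k <= tb k.+1)%N by move/tb_lt/ltnW.
rewrite -(sum_segments tb0 tbn tb_mono _ (fun t : 'I_T => - ln (S t (tnth xs t)))).
apply: le_trans; first by apply: ler_sum => k _; apply: ler_sum => t; exact: step.
rewrite (sum_segments_telescope tb0 tbn tb_mono _ (fun k t => - ln (q k (tnth xs t)))).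
have Phi_bnd : Phi 0%N - Phi T <= cross_entropy (fun=> 1) p - N%:R * ln N%:R.
  have := cross_entropy1_ge (ltnW N_ge2) (S_gt0 T) (S_dist T).2.
  by rewrite /Phi /S take0; lra.
have Psi_bnd : \sum_(k < n) (Psi k (tb k) - Psi k (tb k.+1))
               <= ln (N%:R / e) * PWS_complexity n q.
  rewrite /PWS_complexity mulrDr mulr1 mulr_sumr.
  apply: telescope_segments_le => [|k j kn|k j kn].
  - by rewrite ln_ge0 // ler_pdivlMr // mul1r; lra.
  - exact: cross_entropy_bounds (q_dist k kn) (S_bnd j).
  - exact: cross_entropyBl_le (S_bnd j).
have lnV_gt0 : 0 < ln a^-1 by rewrite ln_gt0 // invf_gt1.
have lnV_inv_ge0 : 0 <= (ln a^-1)^-1 by rewrite invr_ge0 ltW.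
have := ler_wpM2l lnV_inv_ge0 Psi_bnd.
by rewrite mulrA [_^-1 * _]mulrC; lra.
Qed.

Section ExtendedCodeLengths.
Context {R : realType}.
Local Open Scope ereal_scope.

Lemma loginvE (y : R) : (0 < y)%R -> loginv y = (- ln y)%:E.
Proof. by move=> y_gt0; rewrite /loginv /elogdiv gt_eqF // div1r lnV ?posrE. Qed.

Lemma loginv_ge0 (y : R) : (0 <= y <= 1)%R -> 0 <= loginv y.
Proof.
case/andP=> y_ge0 y_le1; rewrite /loginv /elogdiv; case: eqP => [_|/eqP y_neq0].
  exact: leey.
by rewrite lee_fin div1r ln_ge0 // invf_ge1 // lt0r y_neq0.
Qed.

Lemma codelenE {N T : nat} (M : model R N) (xs : T.-tuple 'I_N) :
  (forall t : 'I_T, 0 < M (take t xs) (tnth xs t))%R ->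
  codelen M xs = (\sum_(t < T) - ln (M (take t xs) (tnth xs t)))%:E.
Proof. by move=> M_gt0; rewrite /codelen -sumEFin; apply: eq_bigr => t _; apply: loginvE. Qed.

Section PiecewiseStationary.
Context {N T n : nat} (tb : nat -> nat) {q : nat -> 'I_N -> R} (xs : T.-tuple 'I_N).
Hypothesis q_dist : forall k, (k < n)%N -> is_dist (q k).

Let loginv_q_ge0 (k : 'I_n) (t : 'I_T) : 0 <= loginv (q k (tnth xs t)).
Proof.
have q_dist_k := q_dist _ (ltn_ord k).
by rewrite loginv_ge0 // dist_le1 // andbT; case: q_dist_k.
Qed.

Lemma PWS_codelen_ge0 : 0 <= PWS_codelen n tb q xs.
Proof. by apply: sume_ge0 => k _; apply: sume_ge0. Qed.

Lemma PWS_codelenE :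
  (forall (k : 'I_n) (t : 'I_T), (tb k <= t < tb k.+1)%N -> 0 < q k (tnth xs t))%R ->
  PWS_codelen n tb q xs
  = (\sum_(k < n) \sum_(t < T | (tb k <= t < tb k.+1)%N) - ln (q k (tnth xs t)))%:E.
Proof.
move=> q_gt0; rewrite /PWS_codelen -sumEFin; apply: eq_bigr => k _.
by rewrite -sumEFin; apply: eq_bigr => t t_in; apply/loginvE/q_gt0.
Qed.

Lemma PWS_codelen_cases : PWS_codelen n tb q xs = +oo \/
  (forall (k : 'I_n) (t : 'I_T), (tb k <= t < tb k.+1)%N -> 0 < q k (tnth xs t))%R.
Proof.
case: (pselect (forall (k : 'I_n) (t : 'I_T),
  (tb k <= t < tb k.+1)%N -> 0 < q k (tnth xs t))%R) => [|/existsNP[k /existsNP[t]]]; first by right.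
have [q_ge0 _] := q_dist _ (ltn_ord k).
move=> /not_implyP[t_in /negP]; rewrite lt_def q_ge0 andbT negbK => /eqP q0; left.
apply/eqP; rewrite -leye_eq /PWS_codelen (bigD1 k) //= (bigD1 t) //=.
rewrite {1}/loginv /elogdiv q0 eqxx.
by apply: le_trans (leeDl _ _) (leeDl _ _); apply: sume_ge0 => // k' _; apply: sume_ge0.
Qed.

End PiecewiseStationary.

End ExtendedCodeLengths.

Section UniformDivergence.
Context {R : realType} {N : nat} (p : 'I_N -> R).
Hypothesis N_gt0 : (0 < N)%N.
Local Open Scope ereal_scope.

Let Ninv_gt0 : (0 < N%:R^-1 :> R)%R.
Proof. by rewrite invr_gt0 ltr0n. Qed.

Let NV : (N%:R^-1 *+ N = 1 :> R)%R.
Proof. by rewrite -[RHS](@mulfV _ N%:R) ?mulr_natl // pnatr_eq0 -lt0n. Qed.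

Lemma KL_uniform_ge : is_dist p -> (- ln N%:R)%:E <= KL (@uniform_dist R N) p.
Proof.
move=> p_dist; rewrite /KL /uniform_dist Ninv_gt0.
have -> : (- ln N%:R)%:E = \sum_(x < N) (N%:R^-1 * ln N%:R^-1)%:E :> \bar R.
  by rewrite sumEFin sumr_const card_ord -mulrnAl NV mul1r lnV ?posrE ?ltr0n.
apply: lee_sum => x _; rewrite /elogdiv; case: eqP => [_|/eqP px_neq0].
  by rewrite gt0_muley ?lte_fin // leey.
have px_gt0 : (0 < p x)%R by case: p_dist => p_ge0 _; rewrite lt0r px_neq0 p_ge0.
rewrite -EFinM lee_fin; apply: ler_wpM2l; first exact: ltW.
rewrite ler_ln ?posrE ?divr_gt0 // ler_pdivlMr // -[leRHS]mulr1 ler_pM2l //.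
exact: dist_le1.
Qed.

Lemma KL_uniformE : (forall x, 0 < p x)%R ->
  (N%:R)%:E * KL (@uniform_dist R N) p = (cross_entropy (fun=> 1) p - N%:R * ln N%:R)%:E.
Proof.
move=> p_gt0; rewrite /KL /uniform_dist Ninv_gt0.
under eq_bigr => x _ do rewrite /elogdiv (gt_eqF (p_gt0 x)) -EFinM.
rewrite sumEFin -EFinM mulr_sumr /cross_entropy mulr_natl; congr (_%:E).
rewrite (eq_bigr (fun x => 1 * - ln (p x) - ln N%:R)%R) => [|x _].
  by rewrite sumrB sumr_const card_ord.
rewrite mulrA mulfV ?gt_eqF ?ltr0n // mul1r ln_div ?posrE // lnV ?posrE ?ltr0n //.
by rewrite mul1r addrC.
Qed.

End UniformDivergence.

Theorem theorem1 (R : realType) (N T : nat) (n : nat) (tb : nat -> nat)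
  (q : nat -> 'I_N -> R) (alpha eps : R) (p : 'I_N -> R)
  (xs : T.-tuple 'I_N) :
  (2 <= N)%N -> (1 <= T)%N ->
  is_PWS T n tb q ->
  0 < alpha -> alpha < 1 ->
  0 <= eps -> eps <= 1 - N%:R^-1 ->
  is_dist p -> (forall x, eps / (N%:R - 1) <= p x) ->
  (codelen (PS alpha eps p) xs <=
     PWS_codelen n tb q xs
     + ((ln ((1 - eps)^-1) / ln (alpha^-1) + N%:R * ln (alpha^-1)
         + (N%:R + 1) * ln ((1 - eps)^-1)) * T%:R)%R%:E
     + elogdiv (N%:R)%R eps * ((ln (alpha^-1))^-1)%R%:E
         * (PWS_complexity n q)%:E
     + (N%:R)%R%:E * KL (@uniform_dist R N) p)%E.
Proof.
move=> N_ge2 _ PWS a_gt0 a_lt1 e_ge0 e_le p_dist p_ge.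
have [_ _ _ q_dist] := PWS.
have N_gt0 : (0 < N)%N := ltnW N_ge2.
have NKL_neq : ((N%:R)%:E * KL (@uniform_dist R N) p != -oo)%E.
  rewrite -ltNye (lt_le_trans (ltNyr (N%:R * - ln N%:R))) // EFinM.
  by apply: lee_wpmul2l; [rewrite lee_fin | exact: KL_uniform_ge].
have C_gt0 : 0 < PWS_complexity n q.
  by rewrite /PWS_complexity ltr_wpDr ?ltr01 // sumr_ge0 // => k _; rewrite sumr_ge0.
have PWS_neq : (PWS_codelen n tb q xs != -oo)%E.
  by rewrite -ltNye (lt_le_trans ltNy0) ?PWS_codelen_ge0.
move: e_ge0; rewrite le_eqVlt => /predU1P[e_eq0 | e_gt0].
  rewrite -e_eq0 /elogdiv eqxx !gt0_mulye ?lte_fin ?invr_gt0 ?ln_gt0 ?invf_gt1 //.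
  by rewrite addey ?addye ?leey // adde_eq_ninfty negb_or PWS_neq.
rewrite /elogdiv gt_eqF // -!EFinM.
case: (PWS_codelen_cases tb xs q_dist) => [-> | q_gt0]; first by rewrite !addye ?leey.
have N1_gt0 : (0 : R) < N%:R - 1 by rewrite subr_gt0 ltr1n.
have p_gt0 x : 0 < p x := lt_le_trans (divr_gt0 e_gt0 N1_gt0) (p_ge x).
have a_bnd : 0 <= alpha <= 1 by rewrite !ltW.
have e_bnd : 0 <= eps <= 1 - N%:R^-1 by rewrite ltW.
rewrite codelenE => [|t]; last exact: PS_gt0.
rewrite PWS_codelenE // KL_uniformE // -!EFinD lee_fin.
by apply: PS_neglog_sum_le => //; rewrite ?a_gt0 ?e_gt0.
Qed.
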